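(* For $g,g'\in\mathscr T'$ let $U_{g,g'}:\mathcal F_g\to\mathcal F_{g'}$ be the unique continuous extension of the isometry $\Psi\mapsto e^{a(g-g')}\Psi$, $\Psi\in\mathcal F_{\rm fin}(\mathscr T)$. Then for all $g,g',g''\in\mathscr T'$: $U_{g,g'}$ is unitary; $U_{g,g}=\mathbb 1$; $U_{g',g}=U_{g,g'}^{-1}$; and $U_{g',g''}U_{g,g'}=U_{g,g''}$.
   Context: Let $\mathfrak h$ be a complex Hilbert space, $\mathscr T$ a topological vector space continuously embedded in $\mathfrak h$ with dense image, $\mathscr T'$ the space of continuous antilinear functionals on $\mathscr T$; write $\langle\varphi,f\rangle:=\overline{\varphi(f)}$ for $\varphi\in\mathscr T'$, $f\in\mathscr T$. $\mathcal F(\mathfrak h)$ is the symmetric Fock space; $\mathcal F_{\rm fin}(\mathscr T)$ the vectors with finitely many nonzero components, the $n$-th in the algebraic symmetric tensor product of $n$ copies of $\mathscr T$. For $g\in\mathscr T'$, $a(g)$ on $\mathcal F_{\rm fin}(\mathscr T)$ is defined linearly by $(a(g)\Psi)_n=\frac{\sqrt{n+1}}{(n+1)!}\sum_{\sigma\in S_{n+1}}\langle g,\psi_{\sigma(1)}\rangle\psi_{\sigma(2)}\otimes\cdots\otimes\psi_{\sigma(n+1)}$ for $\Psi_{n+1}=\psi_1\otimes_s\cdots\otimes_s\psi_{n+1}$; $e^{a(g)}=\sum_k a(g)^k/k!$ (finite sum on each vector). $\langle\Psi,\Phi\rangle_g:=\langle e^{a(g)}\Psi,e^{a(g)}\Phi\rangle_{\mathcal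 F(\mathfrak h)}$ is an inner product on $\mathcal F_{\rm fin}(\mathscr T)$ and $\mathcal F_g$ denotes the completion of $\mathcal F_{\rm fin}(\mathscr T)$ with respect to it. *)

From HB Require Import structures.
From mathcomp Require Import all_boot all_order all_algebra.
From mathcomp Require Import all_classical all_reals all_analysis.
From mathcomp Require Import complex.
From mathcomp Require Import fingroup perm.

Set Implicit Arguments.
Unset Strict Implicit.
Unset Printing Implicit Defensive.

Import Order.TTheory GRing.Theory Num.Theory.
Import numFieldTopology.Exports.
Local Open Scope ring_scope.

Section FockDefs.
Variable R : realType.
Local Notation C := (R[i]).

Definition ipnorm (V : lmodType C) (ip : V -> V -> C) (x : V) : C := sqrtC (ip x x).

Definition is_inner_product (V : lmodType C) (ip : V -> V -> C) : Prop :=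
  [/\ forall x y, ip y x = (ip x y)^*,
      forall (a : C) x y z, ip x (a *: y + z) = a * ip x y + ip x z,
      forall x, 0 <= ip x x &
      forall x, ip x x = 0 -> x = 0].

Definition ip_complete (V : lmodType C) (ip : V -> V -> C) : Prop :=
  forall u : nat -> V,
    (forall e : C, 0 < e -> exists N, forall m n, (N <= m)%N -> (N <= n)%N ->
        ipnorm ip (u m - u n) < e) ->
    exists l : V, forall e : C, 0 < e -> exists N, forall n, (N <= n)%N ->
        ipnorm ip (u n - l) < e.

Definition is_hilbert (V : lmodType C) (ip : V -> V -> C) : Prop :=
  is_inner_product ip /\ ip_complete ip.

Definition continuous_dense_embedding (T : topologicalLmodType C)
    (h : lmodType C) (iph : h -> h -> C) (iota : T -> h) : Prop :=
  [/\ forall (a : C) f f', iota (a *: f + f') = a *: iota f + iota f',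
      injective iota,
      forall f (e : C), 0 < e -> \forall f' \near f, ipnorm iph (iota f' - iota f) < e &
      forall (v : h) (e : C), 0 < e -> exists f, ipnorm iph (v - iota f) < e].

Definition in_dual (T : topologicalLmodType C) (phi : T -> C) : Prop :=
  (forall (a : C) f f', phi (a *: f + f') = a^* * phi f + phi f') /\
  (forall f (e : C), 0 < e -> \forall f' \near f, `|phi f' - phi f| < e).

Definition pairing (T : topologicalLmodType C) (phi : T -> C) (f : T) : C := (phi f)^*.

(* ---------- F_fin(T): formal finite linear combinations  sum_k c_k (psi_1 (x)_s ... (x)_s psi_n)
   An entry (c, [:: psi_1; ...; psi_n]) stands for c * psi_1 (x)_s ... (x)_s psi_n, where
   (x)_s is the symmetrization  psi_1 (x)_s ... (x)_s psi_n = 1/n! sum_sigma psi_sigma(1) (x) ... ;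
   the empty list stands for the vacuum. *)

Definition ffin (T : topologicalLmodType C) := seq (C * seq T).

Definition ffin_scale (T : topologicalLmodType C) (a : C) (Psi : ffin T) : ffin T :=
  [seq (a * x.1, x.2) | x <- Psi].

Definition sym_ip (T : topologicalLmodType C) (h : lmodType C) (iph : h -> h -> C)
    (iota : T -> h) (s t : seq T) : C :=
  if size s == size t then
    ((size s)`!%:R)^-1 *
      \sum_(sigma : 'S_(size s)) \prod_(i < size s)
          iph (iota (nth 0 s i)) (iota (nth 0 t (sigma i)))
  else 0.

Definition fock_ip (T : topologicalLmodType C) (h : lmodType C) (iph : h -> h -> C)
    (iota : T -> h) (Psi Phi : ffin T) : C :=
  \sum_(x <- Psi) \sum_(y <- Phi) (x.1)^* * y.1 * sym_ip iph iota x.2 y.2.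

Definition annih_el (T : topologicalLmodType C) (g : T -> C) (x : C * seq T) : ffin T :=
  let n := (size x.2).-1 in
  if x.2 is [::] then [::] else
  [seq (x.1 * (sqrtC (n.+1)%:R / (n.+1)`!%:R) * pairing g (nth 0 x.2 (sigma ord0)),
        [seq nth 0 x.2 (sigma (lift ord0 i)) | i <- enum 'I_n])
   | sigma : 'S_(n.+1)].

Definition annih (T : topologicalLmodType C) (g : T -> C) (Psi : ffin T) : ffin T :=
  flatten (map (annih_el g) Psi).

Definition maxdeg (T : topologicalLmodType C) (Psi : ffin T) : nat :=
  \max_(x <- Psi) size x.2.

(* e^{a(g)} = sum_k a(g)^k / k!  (the sum is finite: a(g)^k Psi = 0 for k > maxdeg Psi) *)
Definition expa (T : topologicalLmodType C) (g : T -> C) (Psi : ffin T) : ffin T :=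
  flatten [seq ffin_scale (k`!%:R)^-1 (iter k (annih g) Psi) | k <- iota 0 (maxdeg Psi).+1].

Definition ip_g (T : topologicalLmodType C) (h : lmodType C) (iph : h -> h -> C)
    (iota : T -> h) (g : T -> C) (Psi Phi : ffin T) : C :=
  fock_ip iph iota (expa g Psi) (expa g Phi).

Definition is_completion (T : topologicalLmodType C) (H : lmodType C)
    (ipH : H -> H -> C) (j : ffin T -> H) (ipV : ffin T -> ffin T -> C) : Prop :=
  [/\ is_hilbert ipH,
      forall Psi Phi, j (Psi ++ Phi) = j Psi + j Phi,
      forall (a : C) Psi, j (ffin_scale a Psi) = a *: j Psi,
      forall Psi Phi, ipH (j Psi) (j Phi) = ipV Psi Phi &
      forall (v : H) (e : C), 0 < e -> exists Psi, ipnorm ipH (v - j Psi) < e].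

Definition ip_continuous (H1 H2 : lmodType C) (ip1 : H1 -> H1 -> C)
    (ip2 : H2 -> H2 -> C) (U : H1 -> H2) : Prop :=
  forall x (e : C), 0 < e -> exists2 d : C, 0 < d &
    forall y, ipnorm ip1 (y - x) < d -> ipnorm ip2 (U y - U x) < e.

Definition unitary (H1 H2 : lmodType C) (ip1 : H1 -> H1 -> C)
    (ip2 : H2 -> H2 -> C) (U : H1 -> H2) : Prop :=
  [/\ forall (a : C) x y, U (a *: x + y) = a *: U x + U y,
      forall x y, ip2 (U x) (U y) = ip1 x y &
      bijective U].

End FockDefs.

(* Represent Psi in F_fin(T) by the symmetric forms
     [fock_eval Psi] : phi_1, ..., phi_n |-> sqrt(n!) <phi_1 (x) ... (x) phi_n, Psi_n>.
   They determine every Fock inner product <Phi, Psi> (take phi_k = <iota w_k, iota .>),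
   and the factor sqrt(n!) makes a(g) act on them by inserting the functional <g, .> in
   front.  Hence e^{a(g)} acts as F |-> sum_k F(<g, .>^k, ...) / k!, and because the forms
   are symmetric and additive in each slot, the binomial theorem gives
   e^{a(g_1)} e^{a(g_2)} = e^{a(g_1 + g_2)} and e^{a(0)} = 1 on these forms.  So
   Psi |-> e^{a(g - g')} Psi is linear and isometric from <.,.>_g to <.,.>_g', and the
   group law holds on F_fin(T); since continuous maps agreeing on a dense set agree, all
   of this passes to the completions. *)

From HB Require Import structures.
From mathcomp Require Import all_boot all_order all_algebra.
From mathcomp Require Import all_classical all_reals all_analysis.
From mathcomp Require Import complex.
From mathcomp Require Import fingroup perm.
From mathcomp Require Import ring.

Set Implicit Arguments.
Unset Strict Implicit.
Unset Printing Implicit Defensive.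

Import Order.TTheory GRing.Theory Num.Theory.
Import numFieldTopology.Exports.
Local Open Scope ring_scope.

Lemma cat_nseq_cons (A : Type) k (x : A) s : nseq k x ++ x :: s = x :: nseq k x ++ s.
Proof. by elim: k => //= k ->. Qed.

Lemma pascal_sum (V : nmodType) (G : nat -> nat -> V) m :
  \sum_(0 <= i < m.+1) (G i.+1 (m - i)%N + G i (m - i).+1) *+ 'C(m, i) =
  \sum_(0 <= i < m.+2) G i (m.+1 - i)%N *+ 'C(m.+1, i).
Proof.
rewrite [RHS]big_nat_recl // bin0 subn0.
under [in RHS]eq_big_nat => i _ do rewrite binS mulrnDr subSS.
rewrite big_split /=.
under eq_bigr => i _ do rewrite mulrnDl.
rewrite big_split /= [RHS]addrA [LHS]addrC; congr (_ + _).
rewrite big_nat_recl // bin0 subn0 [in RHS]big_nat_recr //= bin_small // mulr0n addr0.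
by congr (_ + _); apply: eq_big_nat => i /andP[_ i_lt]; rewrite subnSK.
Qed.

Lemma big_nat_triangle (V : nmodType) (G : nat -> nat -> V) K :
  \sum_(0 <= m < K) \sum_(0 <= i < m.+1) G i (m - i)%N =
  \sum_(0 <= i < K) \sum_(0 <= j < K - i) G i j.
Proof.
elim: K => [|K IH]; first by rewrite !big_geq.
rewrite big_nat_recr //= IH [RHS]big_nat_recr //= subSnn big_nat1.
rewrite [X in _ = _ + X]/= big_nat_recr //= subnn addrA; congr (_ + _).
rewrite -big_split /=; apply: eq_big_nat => i /andP[_ i_lt].
by rewrite subSn ?(ltnW i_lt) // big_nat_recr.
Qed.

Section FockEvaluation.
Variables (R : realType) (T : topologicalLmodType R[i]).
Local Notation C := R[i].
Local Notation fn := (T -> C).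
Implicit Types (f p a b : fn) (phi : seq fn) (psi : seq T) (X Y : ffin T).

Definition permanent n phi psi : C :=
  \sum_(s : 'S_n) \prod_(i < n) phi`_i psi`_(s i).

(* [elem_eval (c, psi) phi] is c <phi_1 (x) ... (x) phi_n, psi_1 (x)_s ... (x)_s psi_n>,
   and 0 when the degrees differ. *)
Definition elem_eval (x : C * seq T) phi : C :=
  if size x.2 == size phi then x.1 / (size phi)`!%:R * permanent (size phi) phi x.2
  else 0.

Definition tensor_eval X phi : C := \sum_(x <- X) elem_eval x phi.

Definition fock_eval X phi : C := sqrtC (size phi)`!%:R * tensor_eval X phi.

Lemma permanent_perm phi phi' psi :
  perm_eq phi phi' -> permanent (size phi) phi psi = permanent (size phi) phi' psi.
Proof.
rewrite perm_sym => pp; have [p ->] := tuple_permP (pp : perm_eq phi' (in_tuple phi)).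
rewrite /permanent [RHS](reindex_inj (mulgI p)); apply: eq_bigr => s _ /=.
rewrite [LHS](reindex_inj (@perm_inj _ p)); apply: eq_bigr => i _ /=.
by rewrite (nth_map i) ?size_enum_ord // nth_ord_enum (tnth_nth 0) permM.
Qed.

Lemma permanent_cons n p phi psi :
  permanent n.+1 (p :: phi) psi =
  \sum_(s : 'S_n.+1) p psi`_(s ord0) * \prod_(i < n) phi`_i psi`_(s (lift ord0 i)).
Proof. by apply: eq_bigr => s _; rewrite big_ord_recl. Qed.

Lemma permanent_cons_sum n p phi psi :
  \sum_(s : 'S_n.+1) p psi`_(s ord0) *
      permanent n phi [seq psi`_(s (lift ord0 i)) | i <- enum 'I_n] =
  n`!%:R * permanent n.+1 (p :: phi) psi.
Proof.
pose P (r : 'S_n.+1) := \prod_(k < n.+1) (p :: phi)`_k psi`_(r k).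
have lift_sum (s : 'S_n.+1) : p psi`_(s ord0) *
    permanent n phi [seq psi`_(s (lift ord0 i)) | i <- enum 'I_n] =
    \sum_(t : 'S_n) P (lift_perm ord0 ord0 t * s)%g.
  rewrite /permanent mulr_sumr; apply: eq_bigr => t _.
  rewrite /P big_ord_recl /= permM lift_perm_id; congr (_ * _).
  apply: eq_bigr => i _; rewrite permM lift_perm_lift.
  by rewrite (nth_map i) ?size_enum_ord // nth_ord_enum.
rewrite (eq_bigr _ (fun s _ => lift_sum s)) exchange_big /=.
rewrite (eq_bigr (fun=> permanent n.+1 (p :: phi) psi)); last first.
  move=> t _; rewrite /permanent [RHS](reindex_inj (mulgI (lift_perm ord0 ord0 t))).
  by apply: eq_bigr.
by rewrite sumr_const card_Sn mulr_natl.
Qed.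

Lemma fock_eval_perm X phi phi' : perm_eq phi phi' -> fock_eval X phi = fock_eval X phi'.
Proof.
move=> pp; rewrite /fock_eval -(perm_size pp); congr (_ * _); apply: eq_bigr => x _.
by rewrite /elem_eval -(perm_size pp) (permanent_perm _ pp).
Qed.

Lemma fock_eval_cat X Y phi : fock_eval (X ++ Y) phi = fock_eval X phi + fock_eval Y phi.
Proof. by rewrite /fock_eval /tensor_eval big_cat mulrDr. Qed.

Lemma fock_eval_scale c X phi : fock_eval (ffin_scale c X) phi = c * fock_eval X phi.
Proof.
rewrite /fock_eval /tensor_eval /ffin_scale big_map [RHS]mulrCA.
congr (_ * _); rewrite mulr_sumr.
by apply: eq_bigr => x _; rewrite /elem_eval /=; case: ifP; rewrite ?mulr0 // !mulrA.
Qed.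

Lemma fock_eval_flatten (Xs : seq (ffin T)) phi :
  fock_eval (flatten Xs) phi = \sum_(X <- Xs) fock_eval X phi.
Proof.
elim: Xs => [|X Xs IH]; last by rewrite /= fock_eval_cat IH big_cons.
by rewrite /fock_eval /tensor_eval !big_nil mulr0.
Qed.

Lemma fock_eval_add_head X a b phi :
  fock_eval X ((a \+ b) :: phi) = fock_eval X (a :: phi) + fock_eval X (b :: phi).
Proof.
rewrite /fock_eval -mulrDr -big_split; congr (_ * _); apply: eq_bigr => x _.
rewrite /elem_eval /=; case: ifP; rewrite ?addr0 // => _.
rewrite !permanent_cons -mulrDr -big_split; congr (_ * _).
by apply: eq_bigr => s _; rewrite mulrDl.
Qed.

Lemma fock_eval_zero_head X phi : fock_eval X (0 :: phi) = 0.
Proof.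
rewrite /fock_eval /tensor_eval big1 ?mulr0 // => x _; rewrite /elem_eval.
by case: ifP => // _; rewrite permanent_cons big1 ?mulr0 // => s _; rewrite mul0r.
Qed.

Lemma fock_eval_annih_el f x phi :
  sqrtC (size phi)`!%:R * tensor_eval (annih_el f x) phi =
  sqrtC (size phi).+1`!%:R * elem_eval x (pairing f :: phi).
Proof.
case: x => c [|psi0 psi]; first by rewrite /tensor_eval big_nil /elem_eval /= !mulr0.
rewrite /tensor_eval /annih_el /= big_map big_enum /= {2}/elem_eval /= eqSS.
have [n_eq|n_neq] := eqVneq (size psi) (size phi); last first.
  rewrite big1 ?mulr0 // => s _.
  by rewrite /elem_eval /= size_map size_enum_ord (negPf n_neq).
rewrite -n_eq; set n := size psi; set ps := psi0 :: psi.
have nf_neq0 k : (k`!%:R : C) != 0 by rewrite pnatr_eq0 -lt0n fact_gt0.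
rewrite (eq_bigr (fun s : 'S_n.+1 => c * sqrtC n.+1%:R / (n.+1`!%:R * n`!%:R) *
    (pairing f ps`_(s ord0) *
     permanent n phi [seq ps`_(s (lift ord0 i)) | i <- enum 'I_n]))); last first.
  move=> s _; rewrite /elem_eval /= size_map size_enum_ord -n_eq eqxx.
  by field; rewrite !nf_neq0.
rewrite -mulr_sumr permanent_cons_sum factS natrM sqrtCM ?nnegrE ?ler0n //.
by field; rewrite nf_neq0 nat1r pnatr_eq0.
Qed.

Lemma fock_eval_annih f X phi : fock_eval (annih f X) phi = fock_eval X (pairing f :: phi).
Proof.
rewrite /fock_eval /annih /tensor_eval big_flatten big_map !mulr_sumr.
by apply: eq_bigr => x _; rewrite fock_eval_annih_el.
Qed.

Lemma fock_eval_iter_annih f k X phi :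
  fock_eval (iter k (annih f) X) phi = fock_eval X (nseq k (pairing f) ++ phi).
Proof.
by elim: k phi => // k IH phi; rewrite iterS fock_eval_annih IH cat_nseq_cons.
Qed.

Lemma size_le_maxdeg X x : x \in X -> (size x.2 <= maxdeg X)%N.
Proof. by move=> Xx; rewrite /maxdeg (big_rem _ Xx) leq_maxl. Qed.

Lemma fock_eval_gt_maxdeg X phi : (maxdeg X < size phi)%N -> fock_eval X phi = 0.
Proof.
move=> deg_lt; rewrite /fock_eval /tensor_eval big1_seq ?mulr0 // => x /andP[_ Xx].
rewrite /elem_eval; case: eqP => // size_eq.
by move: (size_le_maxdeg Xx); rewrite size_eq leqNgt deg_lt.
Qed.

Definition exp_insert p K (F : seq fn -> C) phi : C :=
  \sum_(k < K) (k`!%:R)^-1 * F (nseq k p ++ phi).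

Section ExponentialLaw.
Variables (F : seq fn -> C) (D : nat).
Hypothesis F_perm : forall phi phi', perm_eq phi phi' -> F phi = F phi'.
Hypothesis F_add_head : forall a b phi, F ((a \+ b) :: phi) = F (a :: phi) + F (b :: phi).
Hypothesis F_gt_deg : forall phi, (D < size phi)%N -> F phi = 0.

Lemma exp_insert_widen p K1 K2 phi :
  (D < K1)%N -> (K1 <= K2)%N -> exp_insert p K1 F phi = exp_insert p K2 F phi.
Proof.
move=> D_lt K_le; rewrite /exp_insert.
rewrite (big_ord_widen K2 (fun k => (k`!%:R)^-1 * F (nseq k p ++ phi)) K_le).
rewrite [RHS](bigID (fun k : 'I_K2 => (k < K1)%N)) /= [X in _ = _ + X]big1 ?addr0 //.
move=> k; rewrite -leqNgt => K1_le; rewrite F_gt_deg ?mulr0 //.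
by rewrite size_cat size_nseq (leq_trans D_lt (leq_trans K1_le (leq_addr _ _))).
Qed.

Lemma binomial_nseq_add a b m phi :
  F (nseq m (a \+ b) ++ phi) =
  \sum_(0 <= i < m.+1) F (nseq i a ++ nseq (m - i) b ++ phi) *+ 'C(m, i).
Proof.
elim: m phi => [|m IH] phi; first by rewrite big_nat1 bin0.
have swap (u v : seq fn) c : perm_eq (u ++ c :: v) (c :: u ++ v) by rewrite -cat1s perm_catCA.
rewrite /= -cat_nseq_cons IH -(pascal_sum (fun i j => F (nseq i a ++ nseq j b ++ phi))).
apply: eq_big_nat => i _; congr (_ *+ _).
rewrite catA (F_perm (swap _ _ _)) F_add_head -catA; congr (_ + _).
by apply: F_perm; rewrite perm_sym /= swap.
Qed.

Lemma exp_insert_add a b K phi :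
  (D < K)%N -> exp_insert a K (exp_insert b K F) phi = exp_insert (a \+ b) K F phi.
Proof.
move=> D_lt.
pose G i j := (i`!%:R)^-1 * (j`!%:R)^-1 * F (nseq i a ++ nseq j b ++ phi).
have fact_neq0 k : (k`!%:R : C) != 0 by rewrite pnatr_eq0 -lt0n fact_gt0.
(* Both sides are the sum of [G i j] over [i + j < K]. *)
transitivity (\sum_(0 <= i < K) \sum_(0 <= j < K) G i j).
  rewrite /exp_insert big_mkord; apply: eq_bigr => i _.
  rewrite mulr_sumr big_mkord; apply: eq_bigr => j _.
  rewrite /G (@F_perm (nseq j b ++ nseq i a ++ phi) (nseq i a ++ nseq j b ++ phi)).
    by ring.
  by rewrite perm_catCA.
transitivity (\sum_(0 <= m < K) \sum_(0 <= i < m.+1) G i (m - i)%N); last first.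
  rewrite /exp_insert big_mkord; apply: eq_bigr => m _.
  rewrite binomial_nseq_add mulr_sumr; apply: eq_big_nat => i /andP[_]; rewrite ltnS => i_le.
  have := congr1 (fun n => n%:R : C) (bin_fact i_le); rewrite !natrM => fact_eq.
  rewrite /G -mulr_natr -fact_eq; field.
  by rewrite !fact_neq0 pnatr_eq0 -lt0n bin_gt0 i_le.
rewrite big_nat_triangle; apply: eq_big_nat => i /andP[_ i_lt].
rewrite [LHS](big_cat_nat _ (n := K - i)) ?leq_subr //= [X in _ + X]big1_seq ?addr0 //.
move=> j /andP[_]; rewrite mem_index_iota => /andP[j_ge _].
rewrite /G F_gt_deg ?mulr0 // !size_cat !size_nseq addnA.
rewrite -(leq_add2l i) subnKC ?(ltnW i_lt) // in j_ge.
exact: leq_trans D_lt (leq_trans j_ge (leq_addr _ _)).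
Qed.

End ExponentialLaw.

Lemma fock_eval_expa f X K phi : (maxdeg X < K)%N ->
  fock_eval (expa f X) phi = exp_insert (pairing f) K (fock_eval X) phi.
Proof.
move=> deg_lt; rewrite -(exp_insert_widen (@fock_eval_gt_maxdeg X) _ _ (ltnSn _) deg_lt).
rewrite /expa fock_eval_flatten big_map -{1}(subn0 (maxdeg X).+1) -/(index_iota 0 _) big_mkord.
by apply: eq_bigr => k _; rewrite fock_eval_scale fock_eval_iter_annih.
Qed.

Lemma fock_eval_expa_add f1 f2 X :
  fock_eval (expa f1 (expa f2 X)) =1 fock_eval (expa (f1 \+ f2) X).
Proof.
move=> phi; pose K := (maxn (maxdeg X) (maxdeg (expa f2 X))).+1.
have X_lt : (maxdeg X < K)%N by rewrite ltnS leq_maxl.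
have expa_lt : (maxdeg (expa f2 X) < K)%N by rewrite ltnS leq_maxr.
rewrite (fock_eval_expa _ _ expa_lt) (fock_eval_expa _ _ X_lt).
have -> : fock_eval (expa f2 X) = exp_insert (pairing f2) K (fock_eval X).
  by apply/funext => psi; rewrite (fock_eval_expa _ _ X_lt).
rewrite (exp_insert_add (@fock_eval_perm X) (fock_eval_add_head X) (@fock_eval_gt_maxdeg X)) //.
have -> // : pairing f1 \+ pairing f2 = pairing (f1 \+ f2).
by apply/funext => t; rewrite /pairing /= rmorphD.
Qed.

Lemma fock_eval_expa0 X : fock_eval (expa 0 X) =1 fock_eval X.
Proof.
move=> phi; rewrite (fock_eval_expa _ _ (ltnSn _)) /exp_insert big_ord_recl.
rewrite fact0 invr1 mul1r big1 ?addr0 // => k _.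
have -> : pairing (0 : fn) = 0 by apply/funext => t; rewrite /pairing conjC0.
by rewrite /= fock_eval_zero_head mulr0.
Qed.

Lemma fock_eval_expa_congr f X Y :
  fock_eval X =1 fock_eval Y -> fock_eval (expa f X) =1 fock_eval (expa f Y).
Proof.
move=> XY phi; pose K := (maxn (maxdeg X) (maxdeg Y)).+1.
have X_lt : (maxdeg X < K)%N by rewrite ltnS leq_maxl.
have Y_lt : (maxdeg Y < K)%N by rewrite ltnS leq_maxr.
by rewrite (fock_eval_expa _ _ X_lt) (fock_eval_expa _ _ Y_lt) (funext XY).
Qed.

Lemma fock_eval_expa_linear f c X Y :
  fock_eval (expa f (ffin_scale c X ++ Y)) =1
  fock_eval (ffin_scale c (expa f X) ++ expa f Y).
Proof.
move=> phi; pose K := (maxn (maxdeg (ffin_scale c X ++ Y)) (maxn (maxdeg X) (maxdeg Y))).+1.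
have XY_lt : (maxdeg (ffin_scale c X ++ Y) < K)%N by rewrite ltnS leq_maxl.
have X_lt : (maxdeg X < K)%N by rewrite ltnS !leq_max leqnn orbT.
have Y_lt : (maxdeg Y < K)%N by rewrite ltnS !leq_max leqnn !orbT.
rewrite fock_eval_cat fock_eval_scale (fock_eval_expa _ _ XY_lt).
rewrite (fock_eval_expa _ _ X_lt) (fock_eval_expa _ _ Y_lt) /exp_insert mulr_sumr -big_split.
by apply: eq_bigr => k _; rewrite fock_eval_cat fock_eval_scale mulrDr mulrCA.
Qed.

Lemma fock_eval_tensor_eval X Y : fock_eval X =1 fock_eval Y -> tensor_eval X =1 tensor_eval Y.
Proof.
move=> XY phi; apply: (mulfI _ (XY phi)).
by rewrite sqrtC_eq0 pnatr_eq0 -lt0n fact_gt0.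
Qed.

End FockEvaluation.

Lemma sum_perm_prod_transpose (R : comPzSemiRingType) n (A : 'I_n -> 'I_n -> R) :
  \sum_(s : 'S_n) \prod_(i < n) A i (s i) = \sum_(s : 'S_n) \prod_(i < n) A (s i) i.
Proof.
rewrite (reindex_inj invg_inj); apply: eq_bigr => s _ /=.
by rewrite (reindex_inj (@perm_inj _ s)); apply: eq_bigr => i _ /=; rewrite permK.
Qed.

Section FockInnerProduct.
Variables (R : realType) (T : topologicalLmodType R[i]).
Variables (h : lmodType R[i]) (iph : h -> h -> R[i]) (iota : T -> h).
Implicit Types (W X Y : ffin T).

Definition riesz_seq (s : seq T) : seq (T -> R[i]) :=
  [seq (fun t => iph (iota w) (iota t)) | w <- s].

Lemma fock_ip_tensor_eval W X :
  fock_ip iph iota W X = \sum_(w <- W) (w.1)^* * tensor_eval X (riesz_seq w.2).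
Proof.
apply: eq_bigr => w _; rewrite /tensor_eval mulr_sumr; apply: eq_bigr => x _.
rewrite /sym_ip /elem_eval /riesz_seq size_map eq_sym.
case: eqP => _; last by rewrite !mulr0.
rewrite -!mulrA; congr (_ * (_ * (_ * _))); apply: eq_bigr => s _.
by apply: eq_bigr => i _; rewrite (nth_map 0).
Qed.

Lemma fock_ip_congr_r W X Y :
  fock_eval X =1 fock_eval Y -> fock_ip iph iota W X = fock_ip iph iota W Y.
Proof.
move=> /fock_eval_tensor_eval XY; rewrite !fock_ip_tensor_eval.
by apply: eq_bigr => w _; rewrite XY.
Qed.

Hypothesis iph_conj : forall x y, iph y x = (iph x y)^*.

Lemma sym_ip_conj s t : sym_ip iph iota t s = (sym_ip iph iota s t)^*.
Proof.
rewrite /sym_ip eq_sym; case: eqP => [st_eq|]; last by rewrite conjC0.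
rewrite rmorphM fmorphV /= conjC_nat rmorph_sum /= st_eq; congr (_ * _).
rewrite (sum_perm_prod_transpose (fun i j => iph (iota t`_i) (iota s`_j))).
by apply: eq_bigr => p _; rewrite rmorph_prod; apply: eq_bigr => i _; rewrite iph_conj.
Qed.

Lemma fock_ip_conj W X : fock_ip iph iota X W = (fock_ip iph iota W X)^*.
Proof.
rewrite /fock_ip rmorph_sum exchange_big /=; apply: eq_bigr => x _.
rewrite rmorph_sum; apply: eq_bigr => w _.
by rewrite sym_ip_conj !rmorphM /= conjCK [x.1 * _]mulrC.
Qed.

Lemma fock_ip_congr W W' X X' :
  fock_eval W =1 fock_eval W' -> fock_eval X =1 fock_eval X' ->
  fock_ip iph iota W X = fock_ip iph iota W' X'.
Proof.
move=> WW' XX'; rewrite (fock_ip_congr_r _ XX') fock_ip_conj.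
by rewrite (fock_ip_congr_r _ WW') -fock_ip_conj.
Qed.

End FockInnerProduct.

Section InnerProductSpace.
Variables (R : realType) (V : lmodType R[i]) (ip : V -> V -> R[i]).
Hypothesis ipP : is_inner_product ip.

Lemma ip_conj x y : ip y x = (ip x y)^*.
Proof. by case: ipP. Qed.

Lemma ip_ge0 x : 0 <= ip x x.
Proof. by case: ipP. Qed.

Lemma ip_eq0 x : ip x x = 0 -> x = 0.
Proof. by case: ipP => _ _ _; apply. Qed.

Lemma ipDr x y z : ip x (y + z) = ip x y + ip x z.
Proof. by case: ipP => _ ip_lin _ _; rewrite -[y]scale1r ip_lin mul1r scale1r. Qed.

Lemma ip0r x : ip x 0 = 0.
Proof. by apply/(addrI (ip x 0)); rewrite -ipDr !addr0. Qed.

Lemma ipZr a x y : ip x (a *: y) = a * ip x y.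
Proof. by case: ipP => _ ip_lin _ _; rewrite -[a *: y]addr0 ip_lin ip0r addr0. Qed.

Lemma ipNr x y : ip x (- y) = - ip x y.
Proof. by rewrite -scaleN1r ipZr mulN1r. Qed.

Lemma ipBr x y z : ip x (y - z) = ip x y - ip x z.
Proof. by rewrite ipDr ipNr. Qed.

Lemma ipDl x y z : ip (y + z) x = ip y x + ip z x.
Proof. by rewrite ip_conj ipDr rmorphD /= -!ip_conj. Qed.

Lemma ipZl a x y : ip (a *: y) x = a^* * ip y x.
Proof. by rewrite ip_conj ipZr rmorphM /= -ip_conj. Qed.

Lemma ipNl x y : ip (- y) x = - ip y x.
Proof. by rewrite ip_conj ipNr rmorphN /= -ip_conj. Qed.

Lemma ipBl x y z : ip (y - z) x = ip y x - ip z x.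
Proof. by rewrite ipDl ipNl. Qed.

Lemma ipnorm_ge0 x : 0 <= ipnorm ip x.
Proof. by rewrite sqrtC_ge0 ip_ge0. Qed.

Lemma ipnorm_sqr x : ipnorm ip x ^+ 2 = ip x x.
Proof. exact: sqrtCK. Qed.

Lemma ipnorm_eq0 x : ipnorm ip x = 0 -> x = 0.
Proof. by move/eqP; rewrite sqrtC_eq0 => /eqP /ip_eq0. Qed.

Lemma ipnorm_distC x y : ipnorm ip (x - y) = ipnorm ip (y - x).
Proof. by rewrite /ipnorm -opprB ipNl ipNr opprK. Qed.

Lemma ipnormZ a x : ipnorm ip (a *: x) = `|a| * ipnorm ip x.
Proof.
rewrite /ipnorm ipZl ipZr mulrA -normCKC.
by rewrite sqrtCM ?nnegrE ?exprn_ge0 ?ip_ge0 // sqrCK.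
Qed.

Lemma ip_cauchy_schwarz x y : `|ip x y| <= ipnorm ip x * ipnorm ip y.
Proof.
have [->|y_neq0] := eqVneq y 0; first by rewrite ip0r normr0 mulr_ge0 ?ipnorm_ge0.
have yy_gt0 : 0 < ip y y.
  by rewrite lt0r ip_ge0 andbT; apply: contra_neq y_neq0; apply: ip_eq0.
have yy_real : (ip y y)^* = ip y y by apply/CrealP/ger0_real/ip_ge0.
pose c := - (ip x y)^* / ip y y.
have := ip_ge0 (c *: y + x).
have -> : ip (c *: y + x) (c *: y + x) = ip x x - ip x y * (ip x y)^* / ip y y.
  rewrite ipDl !ipZl !ipDr !ipZr [ip y x]ip_conj /c.
  rewrite rmorphM rmorphN fmorphV /= conjCK yy_real.
  by field; rewrite gt_eqF.
rewrite subr_ge0 ler_pdivrMr // -normCK => normxy_le.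
by rewrite -(ler_pXn2r (_ : 0 < 2)%N) ?nnegrE ?mulr_ge0 ?ipnorm_ge0 // exprMn !ipnorm_sqr.
Qed.

Lemma ipnormD_le x y : ipnorm ip (x + y) <= ipnorm ip x + ipnorm ip y.
Proof.
have re_le : ip x y + (ip x y)^* <= ipnorm ip x * ipnorm ip y *+ 2.
  rewrite -[_ + _](@divfK _ 2%:R) ?pnatr_eq0 // -ReE mulr_natr lerMn2r /=.
  exact: le_trans (leif_Re_Creal _).1 (ip_cauchy_schwarz x y).
rewrite -(ler_pXn2r (_ : 0 < 2)%N) ?nnegrE ?addr_ge0 ?ipnorm_ge0 //.
rewrite ipnorm_sqr sqrrD !ipnorm_sqr ipDl !ipDr [ip y x]ip_conj.
rewrite -!addrA lerD2l !addrA lerD2r.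
exact: re_le.
Qed.

End InnerProductSpace.

Section Continuity.
Variable R : realType.
Local Notation C := R[i].

Definition ip_dense (I : Type) (V : lmodType C) (ip : V -> V -> C) (D : I -> V) : Prop :=
  forall v (e : C), 0 < e -> exists i, ipnorm ip (v - D i) < e.

Lemma ip_continuous_id (V : lmodType C) (ip : V -> V -> C) : ip_continuous ip ip id.
Proof. by move=> x e e_gt0; exists e. Qed.

Lemma ip_continuous_comp (V1 V2 V3 : lmodType C) (ip1 : V1 -> V1 -> C)
    (ip2 : V2 -> V2 -> C) (ip3 : V3 -> V3 -> C) (F : V1 -> V2) (G : V2 -> V3) :
  ip_continuous ip1 ip2 F -> ip_continuous ip2 ip3 G ->
  ip_continuous ip1 ip3 (fun x => G (F x)).
Proof.
move=> F_cont G_cont x e e_gt0; have [d2 d2_gt0 G_near] := G_cont (F x) e e_gt0.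
have [d1 d1_gt0 F_near] := F_cont x d2 d2_gt0.
by exists d1 => // y /F_near /G_near.
Qed.

Lemma lipschitz_ip_continuous (V1 V2 : lmodType C) (ip1 : V1 -> V1 -> C)
    (ip2 : V2 -> V2 -> C) (F : V1 -> V2) (k : C) :
  is_inner_product ip1 -> 0 <= k ->
  (forall x y, ipnorm ip2 (F y - F x) <= k * ipnorm ip1 (y - x)) ->
  ip_continuous ip1 ip2 F.
Proof.
move=> ip1P k_ge0 F_lip x e e_gt0; have k1_gt0 : 0 < k + 1 by rewrite ltr_wpDl.
exists (e / (k + 1)) => [|y]; first by rewrite divr_gt0.
rewrite ltr_pdivlMr // => xy_lt; apply: le_lt_trans (F_lip x y) _.
apply: le_lt_trans xy_lt; rewrite mulrC ler_wpM2l ?ipnorm_ge0 //.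
by rewrite lerDl ler01.
Qed.

Lemma ip_continuous_affine (V : lmodType C) (ip : V -> V -> C) (a : C) (F : V -> V) :
  is_inner_product ip -> (forall x y, F y - F x = a *: (y - x)) ->
  ip_continuous ip ip F.
Proof.
move=> ipP F_affine; apply: (lipschitz_ip_continuous ipP (normr_ge0 a)) => x y.
by rewrite F_affine (ipnormZ ipP).
Qed.

Definition ipC (a b : C^o) : C := a^* * b.

Lemma ipC_inner_product : is_inner_product ipC.
Proof.
split=> [x y|a x y z|x|x].
- by rewrite /ipC rmorphM /= conjCK mulrC.
- by rewrite /ipC mulrDr mulrCA.
- by rewrite /ipC mulrC mul_conjC_ge0.
- by move/eqP; rewrite /ipC mulrC mul_conjC_eq0 => /eqP.
Qed.

Lemma ipnormC (a : C^o) : ipnorm ipC a = `|a|.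
Proof. by rewrite /ipnorm /ipC -normCKC sqrCK. Qed.

Lemma ip_continuous_ipr (V : lmodType C) (ip : V -> V -> C) (c : V) :
  is_inner_product ip -> ip_continuous ip ipC (fun y => ip c y : C^o).
Proof.
move=> ipP; apply: (lipschitz_ip_continuous ipP (ipnorm_ge0 ipP c)) => x y.
by rewrite ipnormC -(ipBr ipP) ip_cauchy_schwarz.
Qed.

Lemma ip_continuous_ipl (V : lmodType C) (ip : V -> V -> C) (c : V) :
  is_inner_product ip -> ip_continuous ip ipC (fun y => ip y c : C^o).
Proof.
move=> ipP; apply: (lipschitz_ip_continuous ipP (ipnorm_ge0 ipP c)) => x y.
by rewrite ipnormC -(ipBl ipP) mulrC ip_cauchy_schwarz.
Qed.

Lemma ip_continuous_dense_eq (I : Type) (V1 V2 : lmodType C) (ip1 : V1 -> V1 -> C)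
    (ip2 : V2 -> V2 -> C) (D : I -> V1) (F1 F2 : V1 -> V2) :
  is_inner_product ip1 -> is_inner_product ip2 -> ip_dense ip1 D ->
  ip_continuous ip1 ip2 F1 -> ip_continuous ip1 ip2 F2 ->
  (forall i, F1 (D i) = F2 (D i)) -> F1 =1 F2.
Proof.
move=> ip1P ip2P D_dense F1_cont F2_cont FD x.
apply/eqP; rewrite -subr_eq0; apply/eqP/(ipnorm_eq0 ip2P).
set e := ipnorm ip2 _; have [//|e_neq0] := eqVneq e 0.
have e2_gt0 : 0 < e / 2%:R by rewrite divr_gt0 ?ltr0n // lt0r e_neq0 ipnorm_ge0.
have [d1 d1_gt0 F1_near] := F1_cont x _ e2_gt0.
have [d2 d2_gt0 F2_near] := F2_cont x _ e2_gt0.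
(* No [Num.min] here: the order of [R[i]] is not total. *)
have [d [d_gt0 d_le1 d_le2]] : exists d, [/\ 0 < d, d <= d1 & d <= d2].
  case: (real_leP (gtr0_real d1_gt0) (gtr0_real d2_gt0)) => [|/ltW] d_le.
  - by exists d1; rewrite lexx.
  - by exists d2; rewrite lexx.
have [k] := D_dense x d d_gt0; rewrite (ipnorm_distC ip1P) => Dx_lt.
have := F1_near _ (lt_le_trans Dx_lt d_le1); rewrite (ipnorm_distC ip2P) => F1_lt.
have F2_lt := F2_near _ (lt_le_trans Dx_lt d_le2).
suff : e < e by rewrite ltxx.
rewrite {1}/e -(subrK (F2 (D k)) (F1 x)) -{1}FD -addrA.
by apply: le_lt_trans (ipnormD_le ip2P _ _) _; rewrite [X in _ < X](splitr e) ltrD.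
Qed.

Lemma ip_continuous_dense_eq2 (I : Type) (V1 V2 : lmodType C) (ip1 : V1 -> V1 -> C)
    (ip2 : V2 -> V2 -> C) (D : I -> V1) (F1 F2 : V1 -> V1 -> V2) :
  is_inner_product ip1 -> is_inner_product ip2 -> ip_dense ip1 D ->
  (forall y, ip_continuous ip1 ip2 (F1^~ y)) -> (forall x, ip_continuous ip1 ip2 (F1 x)) ->
  (forall y, ip_continuous ip1 ip2 (F2^~ y)) -> (forall x, ip_continuous ip1 ip2 (F2 x)) ->
  (forall i k, F1 (D i) (D k) = F2 (D i) (D k)) -> forall x y, F1 x y = F2 x y.
Proof.
move=> ip1P ip2P D_dense F1l F1r F2l F2r FD.
have FDl i : F1 (D i) =1 F2 (D i).
  exact: ip_continuous_dense_eq ip1P ip2P D_dense (F1r _) (F2r _) (FD i).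
move=> x y; apply: (ip_continuous_dense_eq ip1P ip2P D_dense (F1l y) (F2l y)) => i.
exact: FDl.
Qed.

End Continuity.

Section TransitionOperators.
Local Unset Implicit Arguments.
Variables (R : realType) (h : lmodType R[i]) (iph : h -> h -> R[i]).
Variables (T : topologicalLmodType R[i]) (iota : T -> h).
Variables (H : (T -> R[i]) -> lmodType R[i]) (ipH : forall g, H g -> H g -> R[i]).
Variables (j : forall g, ffin T -> H g) (U : forall g g', H g -> H g').
Local Set Implicit Arguments.
Hypothesis completion :
  forall g, in_dual g -> is_completion (ipH g) (j g) (ip_g iph iota g).
Hypothesis U_on_ffin : forall g g', in_dual g -> in_dual g' ->
  ip_continuous (ipH g) (ipH g') (U g g') /\
  (forall Psi, U g g' (j g Psi) = j g' (expa (fun f => g f - g' f) Psi)).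
Implicit Types (g : T -> R[i]) (X Y : ffin T).

Lemma ipH_inner_product g : in_dual g -> is_inner_product (ipH g).
Proof. by case/completion => -[]. Qed.

Lemma j_cat g X Y : in_dual g -> j g (X ++ Y) = j g X + j g Y.
Proof. by case/completion. Qed.

Lemma j_scale g c X : in_dual g -> j g (ffin_scale c X) = c *: j g X.
Proof. by case/completion. Qed.

Lemma ipH_j g X Y : in_dual g -> ipH g (j g X) (j g Y) = ip_g iph iota g X Y.
Proof. by case/completion. Qed.

Lemma j_dense g : in_dual g -> ip_dense (ipH g) (j g).
Proof. by case/completion. Qed.

Lemma U_continuous g g' : in_dual g -> in_dual g' -> ip_continuous (ipH g) (ipH g') (U g g').
Proof. by move=> dg dg'; case: (U_on_ffin dg dg'). Qed.

Lemma U_j g g' X : in_dual g -> in_dual g' ->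
  U g g' (j g X) = j g' (expa (fun f => g f - g' f) X).
Proof. by move=> dg dg'; case: (U_on_ffin dg dg'). Qed.

Lemma j_fock_eval_eq g X Y : in_dual g -> fock_eval X =1 fock_eval Y -> j g X = j g Y.
Proof.
move=> dg XY; have ipP := ipH_inner_product dg.
have jXY Z : ipH g (j g Z) (j g X) = ipH g (j g Z) (j g Y).
  by rewrite !ipH_j // /ip_g (fock_ip_congr_r _ _ _ (fock_eval_expa_congr g XY)).
have jB : j g (X ++ ffin_scale (-1) Y) = j g X - j g Y by rewrite j_cat // j_scale // scaleN1r.
apply/eqP; rewrite -subr_eq0; apply/eqP/(ip_eq0 ipP).
by rewrite -{1}jB (ipBr ipP) jXY subrr.
Qed.

Lemma U_j_id g X : in_dual g -> U g g (j g X) = j g X.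
Proof.
move=> dg; rewrite U_j //; apply: j_fock_eval_eq => //.
have -> : (fun f => g f - g f) = 0 by apply/funext => f; rewrite subrr.
exact: fock_eval_expa0.
Qed.

Lemma U_j_comp g g' g'' X : in_dual g -> in_dual g' -> in_dual g'' ->
  U g' g'' (U g g' (j g X)) = U g g'' (j g X).
Proof.
move=> dg dg' dg''; rewrite !U_j //; apply: j_fock_eval_eq => //.
have <- : (fun f => g' f - g'' f) \+ (fun f => g f - g' f) = (fun f => g f - g'' f).
  by apply/funext => f /=; rewrite addrC addrA subrK.
exact: fock_eval_expa_add.
Qed.

Lemma U_j_linear g g' c X Y : in_dual g -> in_dual g' ->
  U g g' (c *: j g X + j g Y) = c *: U g g' (j g X) + U g g' (j g Y).
Proof.
move=> dg dg'; rewrite -j_scale // -j_cat // !U_j // -j_scale // -j_cat //.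
by apply: j_fock_eval_eq => //; apply: fock_eval_expa_linear.
Qed.

Hypothesis iph_conj : forall x y, iph y x = (iph x y)^*.

Lemma U_j_isometry g g' X Y : in_dual g -> in_dual g' ->
  ipH g' (U g g' (j g X)) (U g g' (j g Y)) = ipH g (j g X) (j g Y).
Proof.
move=> dg dg'; rewrite !U_j // !ipH_j //.
have expa_sum : g' \+ (fun f => g f - g' f) = g by apply/funext => f /=; rewrite addrC subrK.
by apply: (fock_ip_congr iota iph_conj) => Z; rewrite fock_eval_expa_add expa_sum.
Qed.

Lemma U_id g x : in_dual g -> U g g x = x.
Proof.
move=> dg; have ipP := ipH_inner_product dg.
apply: (ip_continuous_dense_eq ipP ipP (j_dense dg) (U_continuous dg dg)).
  exact: ip_continuous_id.
by move=> X; apply: U_j_id.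
Qed.

Lemma U_comp g g' g'' x : in_dual g -> in_dual g' -> in_dual g'' ->
  U g' g'' (U g g' x) = U g g'' x.
Proof.
move=> dg dg' dg''; move: x; apply: (ip_continuous_dense_eq (F1 := U g' g'' \o U g g')
  (ipH_inner_product dg) (ipH_inner_product dg'') (j_dense dg)).
- exact: ip_continuous_comp (U_continuous dg dg') (U_continuous dg' dg'').
- exact: U_continuous.
- by move=> X; apply: U_j_comp.
Qed.

Lemma U_linear g g' c x y : in_dual g -> in_dual g' ->
  U g g' (c *: x + y) = c *: U g g' x + U g g' y.
Proof.
move=> dg dg'; have [ipP ipP'] := (ipH_inner_product dg, ipH_inner_product dg').
have U_cont := U_continuous dg dg'.
move: x y; apply: (ip_continuous_dense_eq2 (F1 := fun x y => U g g' (c *: x + y))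
  (F2 := fun x y => c *: U g g' x + U g g' y) ipP ipP' (j_dense dg)) => [z|z|z|z|X Y].
- apply: ip_continuous_comp _ U_cont.
  by apply: (ip_continuous_affine (a := c) ipP) => u v; rewrite opprD addrACA subrr addr0 scalerBr.
- apply: ip_continuous_comp _ U_cont.
  by apply: (ip_continuous_affine (a := 1) ipP) => u v; rewrite opprD addrACA subrr add0r scale1r.
- apply: (ip_continuous_comp (G := fun w => c *: w + U g g' z) U_cont).
  by apply: (ip_continuous_affine (a := c) ipP') => u v; rewrite opprD addrACA subrr addr0 scalerBr.
- apply: (ip_continuous_comp (G := fun w => c *: U g g' z + w) U_cont).
  by apply: (ip_continuous_affine (a := 1) ipP') => u v; rewrite opprD addrACA subrr add0r scale1r.
- exact: U_j_linear.
Qed.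

Lemma U_isometry g g' x y : in_dual g -> in_dual g' ->
  ipH g' (U g g' x) (U g g' y) = ipH g x y.
Proof.
move=> dg dg'; have [ipP ipP'] := (ipH_inner_product dg, ipH_inner_product dg').
have U_cont := U_continuous dg dg'.
move: x y; apply: (ip_continuous_dense_eq2 (ip2 := @ipC R)
  (F1 := fun x y => ipH g' (U g g' x) (U g g' y) : _^o) (F2 := fun x y => ipH g x y : _^o)
  ipP (@ipC_inner_product R) (j_dense dg)) => [z|z|z|z|X Y].
- exact: ip_continuous_comp U_cont (ip_continuous_ipl _ ipP').
- exact: ip_continuous_comp U_cont (ip_continuous_ipr _ ipP').
- exact: ip_continuous_ipl.
- exact: ip_continuous_ipr.
- exact: U_j_isometry.
Qed.

End TransitionOperators.

Theorem proposition2p14 (R : realType)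
    (h : lmodType R[i]) (iph : h -> h -> R[i])
    (T : topologicalLmodType R[i]) (iota : T -> h)
    (H : (T -> R[i]) -> lmodType R[i]) (ipH : forall g, H g -> H g -> R[i])
    (j : forall g, ffin T -> H g)
    (U : forall g g', H g -> H g') :
  is_hilbert iph ->
  continuous_dense_embedding iph iota ->
  (forall g, in_dual g -> is_completion (ipH g) (j g) (ip_g iph iota g)) ->
  (forall g g', in_dual g -> in_dual g' ->
     ip_continuous (ipH g) (ipH g') (U g g') /\
     (forall Psi, U g g' (j g Psi) = j g' (expa (fun f => g f - g' f) Psi))) ->
  forall g g' g'', in_dual g -> in_dual g' -> in_dual g'' ->
  [/\ unitary (ipH g) (ipH g') (U g g'),
      (forall x, U g g x = x),
      cancel (U g g') (U g' g) /\ cancel (U g' g) (U g g') &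
      (forall x, U g' g'' (U g g' x) = U g g'' x)].
Proof.
move=> [[iph_conj _ _ _] _] _ completion U_on_ffin g g' g'' dg dg' dg''.
have U_cancel g1 g2 : in_dual g1 -> in_dual g2 -> cancel (U g1 g2) (U g2 g1).
  by move=> d1 d2 x; rewrite (U_comp completion U_on_ffin) // (U_id completion U_on_ffin).
split.
- split=> [c x y|x y|].
  + exact: (U_linear completion U_on_ffin).
  + exact: (U_isometry completion U_on_ffin iph_conj).
  + exact: Bijective (U_cancel _ _ dg dg') (U_cancel _ _ dg' dg).
- by move=> x; apply: (U_id completion U_on_ffin).
- by split; apply: U_cancel.
- by move=> x; apply: (U_comp completion U_on_ffin).
Qed.
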